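(* The invariant $\bar\gamma_2$ is a finite type invariant of degree one, in the following sense: if $K$ is an oriented virtual knot diagram and $K'$ is obtained from $K$ by switching exactly one classical crossing, then $\bar\gamma_2(K)=(-1)^1\bar\gamma_2(K')$, i.e. (coefficients being modulo $2$) $\bar\gamma_2(K)=\bar\gamma_2(K')$.
   Context: For an oriented virtual knot diagram $K$ and a classical crossing $c$ with sign $sgn(c)\in\{\pm1\}$, let $K_c$ be the two-component oriented virtual link diagram obtained by smoothing $c$ in the orientation-respecting way. Let $L(K_c)$ be the sum of the signs of all classical crossings of $K_c$ at which the two strands belong to different components, and $\bar L(K_c)=L(K_c)\bmod 2$. Define $\gamma(K)=\sum_{c} t^{\bar L(K_c)}\,sgn(c)$, summing over all classical crossings. In the chord (Gauss) diagram of $K$, each classical crossing is a chord; a chord has odd parity if it intersects an odd number of other chords, and even parity otherwise. Let $P$ be the set of unordered pairs $p$ of intersecting chords of opposite parity, and for $p\in P$ let $K_p$ be the diagram obtained by smoothing both crossings of $p$ in the orientation-respecting way. Define $\bar\gamma_2(K)=\sum_{p\in P}t^2\gamma(K_p)$ with coefficients reduced modulo $2$. The paper's notion of degree: for a set $S$ of classical crossings of a diagram $D$, $D_S$ denotes $D$ with all crossings in $S$ switched; an invariant $v$ has degree $n$ if $v(D)=(-1)^{|S|}v(D_S)$ whenever $|S|=n$. *)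

From mathcomp Require Import all_boot all_order all_algebra.
Set Implicit Arguments. Unset Strict Implicit. Unset Printing Implicit Defensive.
Import GRing.Theory.
Local Open Scope ring_scope.

(* A letter of a Gauss word: (crossing label, true iff the passage is the
   overpassing one).  A Gauss word is read along the orientation of the
   (single, circular) strand, starting at an arbitrary base point. *)
Definition letter := (nat * bool)%type.

(* An oriented virtual knot diagram, as a Gauss diagram: the Gauss word
   together with the signs of the classical crossings (true = +1). *)
Record vknot := VKnot { gword : seq letter ; gsign : nat -> bool }.

Definition sgnz (b : bool) : int := if b then 1 else -1.

Definition crossings (w : seq letter) : seq nat := undup (map fst w).

Definition wf_word (w : seq letter) : bool :=
  all (fun c => (count (fun l => l == (c, true)) w == 1%N) &&
                (count (fun l => l == (c, false)) w == 1%N)) (crossings w).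

Definition is_lab (c : nat) (l : letter) : bool := l.1 == c.

(* Decomposition w = x ++ [c] ++ y ++ [c] ++ z along the two passages of c. *)
Definition pre_c (c : nat) (w : seq letter) := take (find (is_lab c) w) w.
Definition post_c (c : nat) (w : seq letter) := drop (find (is_lab c) w).+1 w.
Definition mid_c (c : nat) (w : seq letter) :=
  pre_c c (post_c c w).
Definition end_c (c : nat) (w : seq letter) :=
  post_c c (post_c c w).

(* A two-component oriented virtual link diagram (Gauss words of the two
   components; signs are kept in a separate sign function). *)
Definition link2 := (seq letter * seq letter)%type.

(* Orientation-respecting smoothing of crossing c of a knot diagram:
   the two components are y and z ++ x (cyclic words). *)
Definition smooth1 (c : nat) (w : seq letter) : link2 :=
  (mid_c c w, end_c c w ++ pre_c c w).

(* L(K_c): sum of signs of the classical crossings whose two strands lie on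
   different components. *)
Definition linkL (s : nat -> bool) (L : link2) : int :=
  \sum_(d <- crossings L.1 | d \in map fst L.2) sgnz (s d).

Definition gamma (K : vknot) : {poly int} :=
  \sum_(c <- crossings (gword K))
     'X^(odd `|linkL (gsign K) (smooth1 c (gword K))|) * (sgnz (gsign K c))%:P.

(* Orientation-respecting smoothing of a crossing d whose strands lie on the
   two different components u = u1 d u2, v = v1 d v2 of a 2-component link:
   the result is the knot u1 v2 v1 u2. *)
Definition smooth_merge (d : nat) (L : link2) : seq letter :=
  pre_c d L.1 ++ post_c d L.2 ++ pre_c d L.2 ++ post_c d L.1.

Definition smooth2 (K : vknot) (c d : nat) : vknot :=
  VKnot (smooth_merge d (smooth1 c (gword K))) (gsign K).

(* chords c and d intersect: exactly one endpoint of d lies between the two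
   endpoints of c *)
Definition chords_intersect (w : seq letter) (c d : nat) : bool :=
  (c != d) && (count (is_lab d) (mid_c c w) == 1%N).

Definition odd_chord (w : seq letter) (c : nat) : bool :=
  odd (count (chords_intersect w c) (crossings w)).

(* unordered pairs {c,d} (enumerated as c < d) of intersecting chords of
   opposite parity *)
Definition in_P (w : seq letter) (c d : nat) : bool :=
  [&& (c < d)%N, chords_intersect w c d & odd_chord w c != odd_chord w d].

Definition reduce2 (p : {poly int}) : {poly 'F_2} := map_poly intr p.

Definition gamma2bar (K : vknot) : {poly 'F_2} :=
  reduce2 (\sum_(c <- crossings (gword K))
             \sum_(d <- crossings (gword K) | in_P (gword K) c d)
                'X^2 * gamma (smooth2 K c d)).

Definition switch (c : nat) (K : vknot) : vknot :=
  VKnot (map (fun l : letter => if l.1 == c then (l.1, ~~ l.2) else l) (gword K))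
        (fun d => if d == c then ~~ gsign K d else gsign K d).

From mathcomp Require Import all_boot all_order all_algebra.
Import GRing.Theory.
Local Open Scope ring_scope.

(* Every construction entering [gamma2bar] (smoothings,
   intersections and parities of chords) reads only the crossing labels of the
   Gauss word, and signs enter only as the coefficients [sgnz _] and through
   the parity of [linkL]; both are insensitive to sign changes modulo 2, since
   each sign is congruent to 1. *)

Section LabelPreservingMap.

Variable f : letter -> letter.
Hypothesis f_lab : forall l, (f l).1 = l.1.

Lemma map_fst_relabel w : map fst (map f w) = map fst w.
Proof. by rewrite -map_comp; apply: eq_map => l /=; rewrite f_lab. Qed.

Lemma crossings_relabel w : crossings (map f w) = crossings w.
Proof. by rewrite /crossings map_fst_relabel. Qed.

Lemma is_lab_relabel d : is_lab d \o f =1 is_lab d.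
Proof. by move=> l; rewrite /is_lab /= f_lab. Qed.

Lemma pre_c_relabel d w : pre_c d (map f w) = map f (pre_c d w).
Proof. by rewrite /pre_c find_map (eq_find (is_lab_relabel d)) map_take. Qed.

Lemma post_c_relabel d w : post_c d (map f w) = map f (post_c d w).
Proof. by rewrite /post_c find_map (eq_find (is_lab_relabel d)) map_drop. Qed.

Lemma mid_c_relabel d w : mid_c d (map f w) = map f (mid_c d w).
Proof. by rewrite /mid_c post_c_relabel pre_c_relabel. Qed.

Lemma end_c_relabel d w : end_c d (map f w) = map f (end_c d w).
Proof. by rewrite /end_c !post_c_relabel. Qed.

Lemma smooth1_relabel d w :
  smooth1 d (map f w) = (map f (smooth1 d w).1, map f (smooth1 d w).2).
Proof. by rewrite /smooth1 mid_c_relabel end_c_relabel pre_c_relabel map_cat. Qed.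

Lemma linkL_relabel s u v : linkL s (map f u, map f v) = linkL s (u, v).
Proof. by rewrite /linkL /= crossings_relabel map_fst_relabel. Qed.

Lemma smooth_merge_relabel d u v :
  smooth_merge d (map f u, map f v) = map f (smooth_merge d (u, v)).
Proof. by rewrite /smooth_merge /= !pre_c_relabel !post_c_relabel !map_cat. Qed.

Lemma chords_intersect_relabel w :
  chords_intersect (map f w) =2 chords_intersect w.
Proof.
move=> a b; rewrite /chords_intersect mid_c_relabel count_map.
by rewrite (eq_count (is_lab_relabel b)).
Qed.

Lemma odd_chord_relabel w : odd_chord (map f w) =1 odd_chord w.
Proof.
move=> a; rewrite /odd_chord crossings_relabel.
by rewrite (eq_count (chords_intersect_relabel w a)).
Qed.

Lemma in_P_relabel w : in_P (map f w) =2 in_P w.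
Proof. by move=> a b; rewrite /in_P chords_intersect_relabel !odd_chord_relabel. Qed.

Lemma gamma_relabel w s : gamma (VKnot (map f w) s) = gamma (VKnot w s).
Proof.
rewrite /gamma /= crossings_relabel; apply: eq_bigr => d _.
by rewrite smooth1_relabel linkL_relabel -surjective_pairing.
Qed.

End LabelPreservingMap.

Lemma odd_absz_sgnzD (b : bool) (x : int) :
  odd `|sgnz b + x| = ~~ odd `|x|.
Proof.
case: b; case: x => [n|n] /=; rewrite ?negbK //.
all: by case: n => [|n] //=; rewrite ?negbK subn1.
Qed.

Lemma odd_linkL_sign s1 s2 L : odd `|linkL s1 L| = odd `|linkL s2 L|.
Proof.
rewrite /linkL; elim: (crossings L.1) => [|d r IH]; first by rewrite !big_nil.
by rewrite !big_cons; case: ifP => // _; rewrite !odd_absz_sgnzD IH.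
Qed.

Lemma reduce2_sgnz b : reduce2 (sgnz b)%:P = 1.
Proof.
rewrite /reduce2 map_polyC /=; case: b => /=; first by rewrite rmorph1.
by have -> : ((-1)%:~R : 'F_2) = 1 by apply/eqP.
Qed.

Lemma reduce2_gamma_sign w s1 s2 :
  reduce2 (gamma (VKnot w s1)) = reduce2 (gamma (VKnot w s2)).
Proof.
rewrite /reduce2 /gamma /= !rmorph_sum; apply: eq_bigr => d _.
rewrite (odd_linkL_sign s1 s2) !rmorphM; congr (_ * _).
exact: etrans (reduce2_sgnz _) (esym (reduce2_sgnz _)).
Qed.

Lemma gamma2bar_relabel_sign (f : letter -> letter) w s1 s2 :
  (forall l, (f l).1 = l.1) ->
  gamma2bar (VKnot (map f w) s1) = gamma2bar (VKnot w s2).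
Proof.
move=> f_lab; rewrite /gamma2bar /reduce2 /= crossings_relabel // !rmorph_sum.
apply: eq_bigr => a _; rewrite !rmorph_sum.
apply: eq_big => [b | b _]; first by rewrite in_P_relabel.
rewrite !rmorphM; congr (_ * _).
rewrite /smooth2 /= smooth1_relabel // smooth_merge_relabel //.
rewrite -surjective_pairing gamma_relabel //; exact: reduce2_gamma_sign.
Qed.

Lemma polyF2_oppr1 : (-1 : {poly 'F_2}) = 1.
Proof. by rewrite -polyCN; have -> : (-1 : 'F_2) = 1 by apply/eqP. Qed.

Theorem mainTheorem7 (K : vknot) (c : nat) :
  wf_word (gword K) -> c \in crossings (gword K) ->
  gamma2bar K = (-1) ^+ 1 * gamma2bar (switch c K).
Proof.
move=> _ _; rewrite expr1 polyF2_oppr1 mul1r; case: K => w s.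
by symmetry; apply: gamma2bar_relabel_sign => l /=; case: ifP.
Qed.
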